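(* Let $Q$ be a positive definite $d\times d$ matrix partitioned into blocks $(Q_{ij})_{i,j=1}^s$. The function $$f(w)=\lambda_{\min}\big(\sqrt{Q^{\rm ext}}\,D^{\rm ext}_w\sqrt{Q^{\rm ext}}\big),\quad Q^{\rm ext}=\mathrm{diag}(Q,1),\quad D^{\rm ext}_w=\mathrm{diag}\Big(w_1(Q_{11})^{-1},\dots,w_s(Q_{ss})^{-1},\ 1-\sum_{i=1}^sw_i\Big),$$ is concave on $\Delta_s=\{w\in\mathbb{R}^s: w_i>0,\ 1-w_1-\dots-w_s>0\}$.
   Context: $\sqrt{\cdot}$ denotes the symmetric positive definite square root and $\lambda_{\min}$ the smallest eigenvalue. *)

From HB Require Import structures.
From mathcomp Require Import all_boot all_order all_algebra.
From mathcomp Require Import boolp classical_sets reals.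
Set Implicit Arguments. Unset Strict Implicit. Unset Printing Implicit Defensive.
Import Order.TTheory GRing.Theory Num.Theory.
Local Open Scope ring_scope.

Section Defs.
Variable R : realType.

Definition symmetric_mx n (A : 'M[R]_n) : Prop := A^T = A.

Definition posdef_mx n (A : 'M[R]_n) : Prop :=
  symmetric_mx A /\ forall x : 'cV[R]_n, x != 0 -> 0 < (x^T *m A *m x) 0 0.

Definition psd_mx n (A : 'M[R]_n) : Prop :=
  symmetric_mx A /\ forall x : 'cV[R]_n, 0 <= (x^T *m A *m x) 0 0.

(* the symmetric positive (semi)definite square root: the (unique) symmetric
   PSD matrix S with S *m S = A (when it exists; 0 otherwise) *)
Definition sqrtm n (A : 'M[R]_n) : 'M[R]_n :=
  match pselect (exists S : 'M[R]_n, psd_mx S /\ S *m S = A) with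
  | left e => projT1 (cid e)
  | right _ => 0
  end.

(* smallest eigenvalue (eigenvalues of a real symmetric matrix are real) *)
Definition lambda_min n (A : 'M[R]_n) : R :=
  inf [set a : R | eigenvalue A a].

Definition open_simplex s : set 'rV[R]_s :=
  [set w | (forall i, 0 < w 0 i) /\ 0 < 1 - \sum_(i < s) w 0 i].

Definition Dw s (n : 'I_s -> nat) (Q : 'M[R]_(\sum_(i < s) n i))
  (w : 'rV[R]_s) : 'M[R]_(\sum_(i < s) n i) :=
  \mxdiag_(i < s) (w 0 i *: invmx (submxblock Q i i)).

Definition Qext s (n : 'I_s -> nat) (Q : 'M[R]_(\sum_(i < s) n i))
  : 'M[R]_(\sum_(i < s) n i + 1) :=
  block_mx Q 0 0 1%:M.

Definition Dext s (n : 'I_s -> nat) (Q : 'M[R]_(\sum_(i < s) n i))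
  (w : 'rV[R]_s) : 'M[R]_(\sum_(i < s) n i + 1) :=
  block_mx (Dw Q w) 0 0 (1 - \sum_(i < s) w 0 i)%:M.

Definition fQ s (n : 'I_s -> nat) (Q : 'M[R]_(\sum_(i < s) n i))
  (w : 'rV[R]_s) : R :=
  lambda_min (sqrtm (Qext Q) *m Dext Q w *m sqrtm (Qext Q)).

End Defs.

From HB Require Import structures.
From mathcomp Require Import all_boot all_order all_algebra.
From mathcomp Require Import boolp classical_sets reals.
From mathcomp Require Import topology normedtype derive.
From mathcomp Require Import ring lra.
Import Order.TTheory GRing.Theory Num.Theory.
Import numFieldNormedType.Exports.
Local Open Scope classical_set_scope.
Local Open Scope ring_scope.

(** The smallest eigenvalue of a symmetric matrix [M] is the minimum of the
    Rayleigh quotient [x M x^T / |x|^2]: the minimum over the unit sphere is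
    attained (compactness), and a minimiser is an eigenvector because
    [M - mu I] is positive semidefinite and vanishes on it. Evaluating at an
    eigenvector of [lambda_min (t A + (1 - t) B)] shows that [lambda_min] is
    concave on symmetric matrices. Since [w |-> D^ext_w] is affine and
    [sqrt(Q^ext)] is symmetric, [w |-> sqrt(Q^ext) D^ext_w sqrt(Q^ext)] is an
    affine family of symmetric matrices, so [f] is concave; only the symmetry
    of [Q] matters, and the inequality holds on all of [R^s]. *)

Section Rayleigh.
Set Implicit Arguments.
Unset Strict Implicit.
Unset Printing Implicit Defensive.
Variable R : realType.
Implicit Types (n : nat).

Definition bform n (M : 'M[R]_n) (x y : 'rV[R]_n) : R := (x *m M *m y^T) 0 0.

Definition qform n (M : 'M[R]_n) (x : 'rV[R]_n) : R := bform M x x.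

Definition sqnorm n (x : 'rV[R]_n) : R := \sum_i x 0 i ^+ 2.

Lemma bformE n (M : 'M[R]_n) x y :
  bform M x y = \sum_i \sum_j x 0 i * M i j * y 0 j.
Proof.
rewrite /bform !mxE exchange_big /=; apply: eq_bigr => i _.
by rewrite !mxE big_distrl.
Qed.

Lemma bformC n (M : 'M[R]_n) x y : M^T = M -> bform M x y = bform M y x.
Proof.
move=> sM; rewrite /bform.
have -> : (x *m M *m y^T) 0 0 = ((x *m M *m y^T)^T) 0 0 by rewrite [RHS]mxE.
by rewrite !trmx_mul trmxK sM mulmxA.
Qed.

Lemma bformZr n (M : 'M[R]_n) x a y : bform M x (a *: y) = a * bform M x y.
Proof. by rewrite /bform linearZ /= -scalemxAr mxE. Qed.

Lemma qformD n (M : 'M[R]_n) x y : M^T = M ->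
  qform M (x + y) = qform M x + 2 * bform M x y + qform M y.
Proof.
move=> sM; have addE (A B : 'M[R]_1) : (A + B) 0 0 = A 0 0 + B 0 0.
  by rewrite mxE.
rewrite /qform /bform linearD /= !(mulmxDl, mulmxDr) !addE.
have := bformC x y sM; rewrite /bform => ->; ring.
Qed.

Lemma qformZ n (M : 'M[R]_n) a x : qform M (a *: x) = a ^+ 2 * qform M x.
Proof.
rewrite /qform !bformE mulr_sumr; apply: eq_bigr => i _.
by rewrite mulr_sumr; apply: eq_bigr => j _; rewrite !mxE; ring.
Qed.

Lemma qform0 n (M : 'M[R]_n) : qform M 0 = 0.
Proof. by rewrite /qform /bform !mul0mx mxE. Qed.

Lemma qform_scaleD n (A B : 'M[R]_n) a b x :
  qform (a *: A + b *: B) x = a * qform A x + b * qform B x.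
Proof.
by rewrite /qform /bform mulmxDr mulmxDl -!scalemxAr -!scalemxAl !mxE.
Qed.

Lemma qform1 n (x : 'rV[R]_n) : qform 1%:M x = sqnorm x.
Proof.
rewrite /qform bformE; apply: eq_bigr => i _.
rewrite (bigD1 i) //= big1 ?addr0 => [|j /negbTE ji]; last first.
  by rewrite mxE eq_sym ji mulr0 mul0r.
by rewrite mxE eqxx mulr1 expr2.
Qed.

Lemma qform_subscalar n (M : 'M[R]_n) a x :
  qform (M - a%:M) x = qform M x - a * sqnorm x.
Proof.
rewrite -qform1 /qform /bform mulmxBr mulmxBl mulmx1 mul_mx_scalar.
by rewrite -scalemxAl !mxE.
Qed.

Lemma qform_eigen n (M : 'M[R]_n) a v :
  v *m M = a *: v -> qform M v = a * sqnorm v.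
Proof.
by move=> Mv; rewrite -qform1 /qform /bform Mv mulmx1 -scalemxAl mxE.
Qed.

Lemma sqnorm0 n : sqnorm (0 : 'rV[R]_n) = 0.
Proof. by rewrite /sqnorm big1 // => i _; rewrite mxE expr0n. Qed.

Lemma sqnorm_ge0 n (x : 'rV[R]_n) : 0 <= sqnorm x.
Proof. by apply: sumr_ge0 => i _; exact: sqr_ge0. Qed.

Lemma sqnorm_eq0 n (x : 'rV[R]_n) : sqnorm x = 0 -> x = 0.
Proof.
move=> /eqP; rewrite psumr_eq0 => [/allP x0|i _]; last exact: sqr_ge0.
apply/rowP => i; rewrite mxE; apply/eqP; rewrite -sqrf_eq0.
exact: (implyP (x0 i (mem_index_enum _))).
Qed.

Lemma sqnorm_gt0 n (x : 'rV[R]_n) : x != 0 -> 0 < sqnorm x.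
Proof.
move=> x0; rewrite lt0r sqnorm_ge0 andbT.
by apply: contra x0 => /eqP/sqnorm_eq0 ->.
Qed.

Lemma continuous_qform n (M : 'M[R]_n) : continuous (qform M).
Proof.
have -> : qform M = fun x => \sum_i \sum_j x 0 i * M i j * x 0 j.
  by apply: funext => x; rewrite /qform bformE.
apply: continuous_big => [|i _]; first exact: add_continuous.
apply: continuous_big => [|j _ x]; first exact: add_continuous.
apply: (@continuousM _ _ (fun x : 'rV[R]_n => x 0 i * M i j) (fun x => x 0 j)).
  apply: (@continuousM _ _ (fun x : 'rV[R]_n => x 0 i) (fun=> M i j)).
    exact: coord_continuous.
  exact: cst_continuous.
exact: coord_continuous.
Qed.

Lemma psd_qform_eq0 n (B : 'M[R]_n) c : B^T = B ->
  (forall x, 0 <= qform B x) -> qform B c = 0 -> c *m B = 0.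
Proof.
move=> sB B_psd Bc; set y := c *m B.
have cy : bform B c y = sqnorm y by rewrite -qform1 /qform /bform mulmx1.
set a := sqnorm y; set b := qform B y.
have a0 : 0 <= a := sqnorm_ge0 y.
have b0 : 0 <= b := B_psd y.
(* [qform B >= 0] on the line [c + t y]; [t = -a/(b+1)] forces [a = 0]. *)
pose t := - a / (b + 1).
have := B_psd (c + t *: y).
rewrite qformD // Bc bformZr qformZ cy add0r => line_ge0.
have b1 : b + 1 != 0 by rewrite gt_eqF //; lra.
have : 0 <= (b + 1) ^+ 2 * (2 * (t * a) + t ^+ 2 * b).
  by apply: mulr_ge0 => //; exact: sqr_ge0.
have -> : (b + 1) ^+ 2 * (2 * (t * a) + t ^+ 2 * b) = - (a ^+ 2 * (b + 2)).
  by rewrite /t; field.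
rewrite oppr_ge0 => a2_le0.
have a_eq0 : a = 0 by nra.
exact: sqnorm_eq0.
Qed.

Lemma rayleigh_min_attained n (M : 'M[R]_n) : (0 < n)%N ->
  exists c, sqnorm c = 1 /\ forall x, qform M c * sqnorm x <= qform M x.
Proof.
move=> n_gt0; pose S := [set x : 'rV[R]_n | sqnorm x = 1].
have S_compact : compact S.
  have cube_compact := rV_compact (n := n)
    (A := fun=> `[-1, 1]%classic : set R) (fun=> @segment_compact _ _ _).
  apply: (subclosed_compact _ cube_compact).
  - apply: (@preimage_closed _ _ (@sqnorm n) [set x | x = 1]).
      by move=> y _; rewrite -(funext (@qform1 n)); exact: continuous_qform.
    exact: closed_eq.
  - move=> v /= Sv i; rewrite /= in_itv /= -ler_norml.
    rewrite -(ler_pXn2r (_ : (0 < 2)%N)) ?nnegrE ?normr_ge0 //.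
    rewrite real_normK ?num_real //.
    rewrite expr1n -Sv /sqnorm (bigD1 i) //= lerDl.
    by apply: sumr_ge0 => j _; exact: sqr_ge0.
have S_neq0 : S !=set0.
  exists (\row_j ((j == Ordinal n_gt0)%:R : R)); rewrite /S /= /sqnorm.
  rewrite (bigD1 (Ordinal n_gt0)) //= big1 ?mxE ?eqxx ?addr0 ?expr1n //.
  by move=> j /negbTE jn; rewrite mxE jn expr0n.
have [c Sc c_min] :=
  EVT_min_rV S_neq0 S_compact (continuous_subspaceT (@continuous_qform _ M)).
have c1 : sqnorm c = 1 by move: Sc; rewrite inE.
exists c; split => // x; have [->|x0] := eqVneq x 0.
  by rewrite qform0 sqnorm0 mulr0.
set r := Num.sqrt (sqnorm x).
have r_gt0 : 0 < r by rewrite sqrtr_gt0 sqnorm_gt0.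
have rr : r ^+ 2 = sqnorm x by rewrite sqr_sqrtr ?sqnorm_ge0.
have := c_min (r^-1 *: x); rewrite inE /S /= -!qform1 !qformZ qform1.
rewrite exprVn rr mulVf ?gt_eqF ?sqnorm_gt0 // => /(_ erefl).
by rewrite -rr ler_pdivlMl ?exprn_gt0 // mulrC.
Qed.

Lemma lambda_minP n (M : 'M[R]_n) : (0 < n)%N -> M^T = M ->
  eigenvalue M (lambda_min M) /\ forall x, lambda_min M * sqnorm x <= qform M x.
Proof.
move=> n_gt0 sM; have [c [c1 c_min]] := rayleigh_min_attained M n_gt0.
set mu := qform M c.
have mu_eig : eigenvalue M mu.
  have cB : c *m (M - mu%:M) = 0.
    apply: psd_qform_eq0 => [|x|]; rewrite ?qform_subscalar ?subr_ge0 //.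
      by rewrite linearB /= sM tr_scalar_mx.
    by rewrite c1 mulr1 subrr.
  apply/eigenvalueP; exists c.
    by apply/eqP; rewrite -subr_eq0 -mul_mx_scalar -mulmxBr cB.
  by apply: contra_eqN c1 => /eqP ->; rewrite sqnorm0 eq_sym oner_eq0.
have mu_lb : lbound [set a : R | eigenvalue M a] mu.
  move=> a /= /eigenvalueP [v Mv v0].
  by have := c_min v; rewrite (qform_eigen Mv) ler_pM2r // sqnorm_gt0.
suff -> : lambda_min M = mu by [].
apply/eqP; rewrite eq_le; apply/andP; split.
  by apply: ge_inf => //; exists mu.
by apply: lb_le_inf => //; exists mu.
Qed.

Lemma lambda_min_concave n (A B : 'M[R]_n) t : (0 < n)%N ->
  A^T = A -> B^T = B -> 0 <= t <= 1 ->
  t * lambda_min A + (1 - t) * lambda_min B <=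
    lambda_min (t *: A + (1 - t) *: B).
Proof.
move=> n_gt0 sA sB /andP[t0 t1].
have sC : (t *: A + (1 - t) *: B)^T = t *: A + (1 - t) *: B.
  by rewrite linearD !linearZ /= sA sB.
have [/eigenvalueP [v Cv v0] _] := lambda_minP n_gt0 sC.
have [_ leA] := lambda_minP n_gt0 sA; have [_ leB] := lambda_minP n_gt0 sB.
rewrite -(ler_pM2r (sqnorm_gt0 v0)) -(qform_eigen Cv) qform_scaleD.
rewrite mulrDl -!mulrA.
by rewrite lerD // ler_wpM2l // subr_ge0.
Qed.

End Rayleigh.

Lemma scale_mxdiag (K : pzSemiRingType) p (p_ : 'I_p -> nat) a
    (B_ : forall i, 'M[K]_(p_ i)) :
  \mxdiag_(i < p) (a *: B_ i) = a *: \mxdiag_(i < p) B_ i.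
Proof.
rewrite -mul_scalar_mx -(@mxdiagZ _ _ p_ a) [X in _ *m X]/mxdiag.
rewrite mul_mxdiag_mxblock /mxdiag; apply: eq_mxblock => i j.
by case: eqVneq => [<-|_]; rewrite ?mulmx0 // !conform_mx_id mul_scalar_mx.
Qed.

Section Dext.
Variable R : realType.

Lemma sqrtm_sym n (A : 'M[R]_n) : (sqrtm A)^T = sqrtm A.
Proof.
rewrite /sqrtm; case: pselect => [e|_]; last exact: trmx0.
by have [[sS _] _] := projT2 (cid e).
Qed.

Variables (s : nat) (n : 'I_s -> nat) (Q : 'M[R]_(\sum_(i < s) n i)).

Lemma Dext_sym w : Q^T = Q -> (Dext Q w)^T = Dext Q w.
Proof.
move=> sQ; rewrite /Dext tr_block_mx !trmx0 tr_scalar_mx /Dw tr_mxdiag.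
congr block_mx; apply: eq_mxdiag => i.
by rewrite linearZ /= trmx_inv tr_submxblock sQ.
Qed.

Lemma Dw_scaleD a b w1 w2 :
  Dw Q (a *: w1 + b *: w2) = a *: Dw Q w1 + b *: Dw Q w2.
Proof.
rewrite /Dw -!scale_mxdiag -mxdiagD; apply: eq_mxdiag => i.
by rewrite !mxE scalerDl !scalerA.
Qed.

Lemma Dext_convex t w1 w2 :
  Dext Q (t *: w1 + (1 - t) *: w2) = t *: Dext Q w1 + (1 - t) *: Dext Q w2.
Proof.
rewrite /Dext !scale_block_mx add_block_mx !scaler0 !addr0 Dw_scaleD.
congr block_mx; rewrite !scale_scalar_mx -raddfD /=; congr (_%:M).
rewrite (eq_bigr (fun i => t * w1 0 i + (1 - t) * w2 0 i)) => [|i _].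
  by rewrite big_split /= -!mulr_sumr; ring.
by rewrite !mxE.
Qed.

End Dext.

Theorem proposition3 (R : realType) (s : nat) (n : 'I_s -> nat)
  (Q : 'M[R]_(\sum_(i < s) n i)) :
  (forall i, (0 < n i)%N) ->
  posdef_mx Q ->
  forall (w1 w2 : 'rV[R]_s) (t : R),
    open_simplex w1 -> open_simplex w2 -> 0 <= t <= 1 ->
    t * fQ Q w1 + (1 - t) * fQ Q w2 <= fQ Q (t *: w1 + (1 - t) *: w2).
Proof.
move=> _ [sQ _] w1 w2 t _ _ t01.
set S := sqrtm (Qext Q).
have congr_sym w : (S *m Dext Q w *m S)^T = S *m Dext Q w *m S.
  by rewrite !trmx_mul sqrtm_sym Dext_sym // mulmxA.
rewrite /fQ -/S Dext_convex mulmxDr mulmxDl -!scalemxAr -!scalemxAl.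
by apply: lambda_min_concave; rewrite ?addn1.
Qed.
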